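(* Let $D$ be a Dedekind domain with field of fractions $K$ and let $A$ be a $D$-algebra with standard assumptions. Then $\textnormal{Int}_K(A)\neq D[X]$ if and only if there exists a nonzero prime ideal $P$ of $D$ with $D/P$ finite such that $A/PA$ is an algebraic $D/P$-algebra of bounded degree.
   Context: A $D$-algebra $A$ satisfies the standard assumptions if it is torsion-free as a $D$-module and $A\cap K = D$ inside $K\otimes_D A$; polynomials in $K[X]$ are evaluated in $K\otimes_D A$, and $\textnormal{Int}_K(A)=\{f\in K[X]\mid f(A)\subseteq A\}$. An algebra over a field $F$ is algebraic of bounded degree if there is $n$ such that every element satisfies a nonzero polynomial over $F$ of degree at most $n$. *)

From HB Require Import structures.
From mathcomp Require Import all_boot all_order all_algebra.
Set Implicit Arguments. Unset Strict Implicit. Unset Printing Implicit Defensive.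
Import Order.TTheory GRing.Theory Num.Theory.
Local Open Scope ring_scope.

(* The domain D is represented as a subring of its field of fractions K;
   ideals of D are represented as subsets of D (hence of K). *)
Section DomainDefs.
Variable K : fieldType.

Definition is_subring (D : {pred K}) : Prop :=
  [/\ 1 \in D, (forall x y, x \in D -> y \in D -> x - y \in D)
    & (forall x y, x \in D -> y \in D -> x * y \in D)].

Definition is_frac_field_of (D : {pred K}) : Prop :=
  forall x : K, exists a b, [/\ a \in D, b \in D, b != 0 & x = a / b].

Definition is_ideal (D I : {pred K}) : Prop :=
  [/\ {subset I <= D}, 0 \in I,
      (forall x y, x \in I -> y \in I -> x + y \in I)
    & (forall d x, d \in D -> x \in I -> d * x \in I)].

Definition is_prime_ideal (D P : {pred K}) : Prop :=
  [/\ is_ideal D P, 1 \notin P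
    & forall a b, a \in D -> b \in D -> a * b \in P -> a \in P \/ b \in P].

Definition nonzero_ideal (P : {pred K}) : Prop := exists2 x, x \in P & x != 0.

Definition fin_gen_ideal (D I : {pred K}) : Prop :=
  exists s : seq K, all (mem D) s /\
    forall x, x \in I <->
      exists c : 'I_(size s) -> K,
        (forall i, c i \in D) /\ x = \sum_(i < size s) c i * s`_i.

Definition noetherian (D : {pred K}) : Prop :=
  forall I, is_ideal D I -> fin_gen_ideal D I.

Definition integrally_closed (D : {pred K}) : Prop :=
  forall x : K, (exists p : {poly K}, [/\ p \is monic, p \is a polyOver D & root p x]) ->
    x \in D.

Definition dim_le1 (D : {pred K}) : Prop :=
  forall P, is_prime_ideal D P -> nonzero_ideal P ->
    forall I, is_ideal D I -> {subset P <= I} -> 1 \notin I -> {subset I <= P}.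

Definition dedekind (D : {pred K}) : Prop :=
  [/\ is_subring D, noetherian D, integrally_closed D & dim_le1 D].

Definition finite_quotient (D P : {pred K}) : Prop :=
  exists s : seq K, all (mem D) s /\
    forall d, d \in D -> exists2 r, r \in s & d - r \in P.

End DomainDefs.

(* The algebra A is represented inside B = K (x)_D A, a K-algebra. *)
Section AlgebraDefs.
Variables (K : fieldType) (B : algType K).

(* A is a (unital) D-subalgebra of B with K A = B (so B = K (x)_D A, A torsion-free)
   and A \cap K = D. *)
Definition standard_assumptions (D : {pred K}) (A : {pred B}) : Prop :=
  [/\ (1 \in A /\ (forall x y, x \in A -> y \in A -> x - y \in A)),
      (forall x y, x \in A -> y \in A -> x * y \in A),
      (forall d x, d \in D -> x \in A -> d *: x \in A),
      (forall b : B, exists k : K, exists2 a, a \in A & b = k *: a)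
    & (forall k : K, k%:A \in A <-> k \in D)].

Definition in_IntK (A : {pred B}) (f : {poly K}) : Prop :=
  forall a, a \in A -> horner_alg a f \in A.

Definition in_ideal_mul (P : {pred K}) (A : {pred B}) (b : B) : Prop :=
  exists s : seq (K * B), all (fun x => (x.1 \in P) && (x.2 \in A)) s /\
    b = \sum_(x <- s) x.1 *: x.2.

(* A/PA is algebraic of bounded degree over D/P, stated via representatives:
   there is n such that every a in A is a root, modulo PA, of a polynomial
   g in D[X] of degree <= n whose reduction mod P is nonzero. *)
Definition bounded_algebraic_mod (D P : {pred K}) (A : {pred B}) : Prop :=
  exists n : nat, forall a, a \in A ->
    exists g : {poly K}, [/\ g \is a polyOver D, (size g <= n.+1)%N,
                             ~~ (g \is a polyOver P) & in_ideal_mul P A (horner_alg a g)].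

End AlgebraDefs.

From HB Require Import structures.
From mathcomp Require Import all_boot all_order all_algebra boolp ring.
Set Implicit Arguments. Unset Strict Implicit. Unset Printing Implicit Defensive.
Import GRing.Theory.
Local Open Scope ring_scope.

(* If f lies in Int_K(A) but not in D[X], its conductor {c in D | c f in D[X]}
   is contained in a maximal ideal M.  An element t of M^-1 outside D cannot
   stabilise the conductor (D is integrally closed), so some c in it has
   c f not in M[X].  Then g = c f is a polynomial over D, nonzero modulo M,
   which vanishes modulo M on all of D -- hence D/M is finite -- and satisfies
   g(a) in MA for every a in A -- hence A/MA has bounded degree.
   Conversely, if D/P is finite and every element of A is a root modulo PA of
   a polynomial of degree <= n that is nonzero modulo P, the product G of all
   such polynomials with coefficients in a residue system of D/P maps A into
   PA without vanishing modulo P; multiplying G by t in P^-1 \ D and by an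
   inverse modulo P of one of its coefficients yields an element of
   Int_K(A) \ D[X]. *)

(** * Ideals of a subring of a field *)

Section Ideals.
Variables (K : fieldType) (D : {pred K}).
Hypothesis Dsub : is_subring D.

Lemma is_subring_closed : GRing.subring_closed D.
Proof. by case: Dsub. Qed.
HB.instance Definition _ := GRing.isSubringClosed.Build K D is_subring_closed.

Section Ideal.
Variable I : {pred K}.
Hypothesis Iid : is_ideal D I.

Lemma ideal_sub : {subset I <= D}.
Proof. by case: Iid. Qed.

Lemma idealMl d x : d \in D -> x \in I -> d * x \in I.
Proof. by case: Iid => _ _ _; apply. Qed.

Lemma idealMr d x : d \in D -> x \in I -> x * d \in I.
Proof. by rewrite mulrC; apply: idealMl. Qed.

Lemma ideal_zmod_closed : zmod_closed I.
Proof.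
case: Iid => _ I0 ID _; split=> // x y xI yI.
by rewrite ID // -mulN1r idealMl ?rpredN ?rpred1.
Qed.
HB.instance Definition _ := GRing.isZmodClosed.Build K I ideal_zmod_closed.

Lemma idealD x y : x \in I -> y \in I -> x + y \in I.
Proof. exact: rpredD. Qed.

Lemma idealN x : x \in I -> - x \in I.
Proof. by rewrite rpredN. Qed.

Lemma ideal_sum (J : Type) (r : seq J) (Pr : pred J) (F : J -> K) :
  (forall j, Pr j -> F j \in I) -> \sum_(j <- r | Pr j) F j \in I.
Proof. exact: rpred_sum. Qed.

Lemma polyOver_idealP (p : {poly K}) : reflect (forall i, p`_i \in I) (p \is a polyOver I).
Proof. exact: polyOverP. Qed.

Lemma polyOver_idealB (p q : {poly K}) :
  p \is a polyOver I -> q \is a polyOver I -> p - q \is a polyOver I.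
Proof. exact: rpredB. Qed.

End Ideal.

Lemma noetherian_generators I : noetherian D -> is_ideal D I ->
  exists s : seq K, {subset s <= I} /\
    forall x, x \in I -> exists2 c : 'I_(size s) -> K,
      (forall i, c i \in D) & x = \sum_(i < size s) c i * s`_i.
Proof.
move=> noeth Iid; have [s [_ sgen]] := noeth I Iid.
exists s; split => [x /(nthP 0) [i ilt <-] | x /sgen [c [cD ->]]]; last by exists c.
apply/sgen; exists (fun j : 'I_(size s) => (val j == i)%:R); split => [j|].
  by case: eqP; rewrite ?rpred1 ?rpred0.
rewrite (bigD1 (Ordinal ilt)) //= eqxx mul1r big1 ?addr0 // => j.
by rewrite -val_eqE /= => /negbTE ->; rewrite mul0r.
Qed.

Lemma noetherian_chain_stationary (ch : nat -> {pred K}) : noetherian D ->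
    (forall n, is_ideal D (ch n)) -> (forall n, {subset ch n <= ch n.+1}) ->
  exists N, {subset ch N.+1 <= ch N}.
Proof.
move=> noeth chI chS.
have chM m n : (m <= n)%N -> {subset ch m <= ch n}.
  by move=> /subnK <-; elim: (n - m)%N => [|k IH] x // /IH /chS.
pose U : {pred K} := [pred x | `[< exists n, x \in ch n >]].
have UP x : reflect (exists n, x \in ch n) (x \in U) by apply: asboolP.
have Uid : is_ideal D U.
  split=> [x /UP [n /(ideal_sub (chI n))] // | | x y | d x dD].
  - by apply/UP; exists 0%N; case: (chI 0%N).
  - move=> /UP [m xm] /UP [n yn]; apply/UP; exists (maxn m n).
    by apply: (idealD (chI _)); [apply: chM xm | apply: chM yn];
       rewrite ?leq_maxl ?leq_maxr.
  - by move=> /UP [n xn]; apply/UP; exists n; apply: idealMl.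
have [s [sU sgen]] := noetherian_generators noeth Uid.
have nfE (i : 'I_(size s)) : exists n, s`_i \in ch n by apply/UP/sU/mem_nth.
have [nf nfP] := fin_all_exists nfE.
exists (\max_(i < size s) nf i)%N => x xS.
have /sgen [c cD ->] : x \in U by apply/UP; exists (\max_(i < size s) nf i).+1%N.
apply: (ideal_sum (chI _)) => i _; apply: (idealMl (chI _)) => //.
exact: chM (leq_bigmax i) _ (nfP i).
Qed.

Lemma noetherian_maximal (F : {pred K} -> Prop) : noetherian D ->
    (forall I, F I -> is_ideal D I) -> (exists I, F I) ->
  exists2 M, F M & forall J, F J -> {subset M <= J} -> {subset J <= M}.
Proof.
move=> noeth FI [I0 FI0]; apply: contrapT => noMax.
have step (M : {M | F M}) : exists J : {J | F J},
    {subset sval M <= sval J} /\ ~ {subset sval J <= sval M}.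
  case: M => M FM; apply: contra_notP noMax => noJ; exists M => // J FJ MJ.
  by case: (pselect {subset J <= M}) => // JM; case: noJ; exists (exist _ J FJ).
have [next nextP] := choice step.
pose chain n := iter n next (exist _ I0 FI0).
have [N chN] := noetherian_chain_stationary (ch := fun n => sval (chain n)) noeth
  (fun n => FI _ (svalP (chain n))) (fun n => (nextP (chain n)).1).
exact: (nextP (chain N)).2 chN.
Qed.

Definition maximal_ideal (M : {pred K}) : Prop :=
  [/\ is_ideal D M, 1 \notin M & forall J, is_ideal D J ->
        {subset M <= J} -> 1 \notin J -> {subset J <= M}].

Lemma noetherian_maximal_ideal_sup I : noetherian D -> is_ideal D I -> 1 \notin I ->
  exists2 M, maximal_ideal M & {subset I <= M}.
Proof.
move=> noeth Iid I1.
have [M [Mid IM M1] Mmax] :=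
  noetherian_maximal (F := fun J => [/\ is_ideal D J, {subset I <= J} & 1 \notin J])
    noeth (fun J => fun '(And3 Jid _ _) => Jid) (ex_intro _ I (And3 Iid (fun x => id) I1)).
exists M => //; split => // J Jid MJ J1.
by apply: Mmax => //; split => // x /IM /MJ.
Qed.

Definition ideal_adjoin (M : {pred K}) (c : K) : {pred K} :=
  [pred x | `[< exists m r, [/\ m \in M, r \in D & x = m + r * c] >]].

Lemma ideal_adjoinP M c x :
  reflect (exists m r, [/\ m \in M, r \in D & x = m + r * c]) (x \in ideal_adjoin M c).
Proof. exact: asboolP. Qed.

Lemma ideal_adjoin_ideal M c : is_ideal D M -> c \in D -> is_ideal D (ideal_adjoin M c).
Proof.
move=> Mid cD; split=> [x | | x y | d x dD].
- by case/ideal_adjoinP=> m [r [mM rD ->]]; rewrite rpredD ?rpredM ?(ideal_sub Mid mM).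
- by apply/ideal_adjoinP; exists 0, 0; split; rewrite ?mul0r ?addr0 ?rpred0 //; case: Mid.
- case/ideal_adjoinP=> m [r [mM rD ->]] /ideal_adjoinP [m' [r' [mM' rD' ->]]].
  apply/ideal_adjoinP; exists (m + m'), (r + r'); split; rewrite ?rpredD ?idealD //.
  ring.
- case/ideal_adjoinP=> m [r [mM rD ->]]; apply/ideal_adjoinP; exists (d * m), (d * r).
  by split; rewrite ?rpredM ?idealMl //; ring.
Qed.

Lemma maximal_ideal_unit M c : maximal_ideal M -> c \in D -> c \notin M ->
  exists2 r, r \in D & 1 - r * c \in M.
Proof.
case=> Mid M1 Mmax cD /negP cM; apply: contrapT => noinv; apply: cM.
apply: (Mmax (ideal_adjoin M c)); first exact: ideal_adjoin_ideal.
- by move=> x xM; apply/ideal_adjoinP; exists x, 0; rewrite mul0r addr0 rpred0.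
- apply/negP => /ideal_adjoinP [m [r [mM rD e1]]]; apply: noinv; exists r => //.
  by rewrite e1 addrK.
- by apply/ideal_adjoinP; exists 0, 1; split; rewrite ?mul1r ?add0r ?rpred1 //; case: Mid.
Qed.

Lemma maximal_ideal_prime M : maximal_ideal M -> is_prime_ideal D M.
Proof.
move=> Mmax; have [Mid M1 _] := Mmax; split => // a b aD bD abM.
apply: contrapT => /not_orP [/negP aM /negP bM].
have [r rD ra] := maximal_ideal_unit Mmax aD aM.
have [r' rD' rb] := maximal_ideal_unit Mmax bD bM.
move/negP: M1; apply.
have -> : 1 = (1 - r * a) + r * a * (1 - r' * b) + r * r' * (a * b) by ring.
apply: (idealD Mid); first apply: (idealD Mid ra).
  by apply: (idealMl Mid) => //; rewrite rpredM.
by apply: (idealMl Mid) => //; rewrite rpredM.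
Qed.

Lemma dim_le1_maximal P : dim_le1 D -> is_prime_ideal D P -> nonzero_ideal P ->
  maximal_ideal P.
Proof. by move=> dim1 Ppr Pnz; case: (Ppr) => Pid P1 _; split => // J; apply: dim1. Qed.

Lemma prime_ideal_mul_notin P a b : is_prime_ideal D P -> a \in D -> b \in D ->
  a \notin P -> b \notin P -> a * b \notin P.
Proof.
by case=> _ _ Pp aD bD /negP aP /negP bP; apply/negP => /(Pp _ _ aD bD) [].
Qed.

Section LocalizedColon.
Variables (P : {pred K}) (x : K).

(* [localized_colon y] is the colon ideal (x D_P : y) cut down to D; a maximal
   proper one is an associated prime of x D, hence equals P when dim D <= 1. *)
Definition localized_colon (y : K) : {pred K} :=
  [pred d | `[< d \in D /\
     exists s e, [/\ s \in D, s \notin P, e \in D & s * d * y = x * e] >]].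

Lemma localized_colonP y d : reflect
  (d \in D /\ exists s e, [/\ s \in D, s \notin P, e \in D & s * d * y = x * e])
  (d \in localized_colon y).
Proof. exact: asboolP. Qed.

Hypothesis Ppr : is_prime_ideal D P.

Lemma localized_colon_ideal y : is_ideal D (localized_colon y).
Proof.
have P1 : 1 \notin P by case: Ppr.
split=> [d /localized_colonP [] // | | d1 d2 | r d rD].
- apply/localized_colonP; split; first exact: rpred0.
  by exists 1, 0; rewrite rpred1 rpred0 P1; split => //; ring.
- move=> /localized_colonP [d1D [s1 [e1 [s1D s1P e1D E1]]]].
  move=> /localized_colonP [d2D [s2 [e2 [s2D s2P e2D E2]]]].
  apply/localized_colonP; split; first exact: rpredD.
  exists (s1 * s2), (s2 * e1 + s1 * e2); split; rewrite ?rpredD ?rpredM //.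
    exact: prime_ideal_mul_notin.
  have -> : s1 * s2 * (d1 + d2) * y = s2 * (s1 * d1 * y) + s1 * (s2 * d2 * y) by ring.
  by rewrite E1 E2; ring.
- move=> /localized_colonP [dD [s [e [sD sP eD E]]]].
  apply/localized_colonP; split; first exact: rpredM.
  exists s, (r * e); split; rewrite ?rpredM //.
  have -> : s * (r * d) * y = r * (s * d * y) by ring.
  by rewrite E; ring.
Qed.

Lemma localized_colon_shift y a b : a \in D -> b \in D ->
  (b \in localized_colon (a * y)) = (a * b \in localized_colon y).
Proof.
move=> aD bD; apply/localized_colonP/localized_colonP; rewrite rpredM //.
  by case=> _ [s [e [? ? ? E]]]; split=> //; exists s, e; split; rewrite // -E; ring.
by case=> _ [s [e [? ? ? E]]]; split=> //; exists s, e; split; rewrite // -E; ring.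
Qed.

Lemma localized_colon_sub y : 1 \notin localized_colon y -> {subset localized_colon y <= P}.
Proof.
move=> /negP Q1 d /localized_colonP [dD [s [e [sD sP eD E]]]].
apply: contrapT => /negP dP; apply: Q1; apply/localized_colonP; split; first exact: rpred1.
exists (s * d), e; split; rewrite ?rpredM // ?mulr1 //.
exact: prime_ideal_mul_notin.
Qed.

Lemma localized_colon_maximal_prime y : y \in D ->
    (forall z, z \in D -> 1 \notin localized_colon z ->
       {subset localized_colon y <= localized_colon z} ->
       {subset localized_colon z <= localized_colon y}) ->
  1 \notin localized_colon y -> is_prime_ideal D (localized_colon y).
Proof.
move=> yD ymax Q1; split => //; first exact: localized_colon_ideal.
move=> a b aD bD abQ; case: (boolP (a \in localized_colon y)) => [|aQ]; [by left | right].
apply: (ymax (a * y)); rewrite ?rpredM //; last by rewrite localized_colon_shift.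
  by rewrite localized_colon_shift ?rpred1 // mulr1.
move=> d dQ; have dD := ideal_sub (localized_colon_ideal y) dQ.
by rewrite localized_colon_shift // (idealMl (localized_colon_ideal y)).
Qed.

Lemma localized_colon_common_denom y (g : seq K) :
    {subset g <= localized_colon y} ->
  exists s, [/\ s \in D, s \notin P &
    forall z, z \in g -> exists2 e, e \in D & s * z * y = x * e].
Proof.
elim: g => [_ | z g IH /allP /= /andP [zQ /allP /IH [s2 [s2D s2P H2]]]].
  by exists 1; rewrite rpred1; case: Ppr.
move/localized_colonP: zQ => [zD [s1 [e1 [s1D s1P e1D E1]]]].
exists (s1 * s2); split; rewrite ?rpredM ?prime_ideal_mul_notin // => w.
rewrite inE => /predU1P [-> | /H2 [e eD E]].
  by exists (s2 * e1); rewrite ?rpredM // [RHS]mulrCA -E1; ring.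
by exists (s1 * e); rewrite ?rpredM // [RHS]mulrCA -E; ring.
Qed.

End LocalizedColon.

Lemma prime_ideal_inverse P : noetherian D -> dim_le1 D ->
    is_prime_ideal D P -> nonzero_ideal P ->
  exists2 t, t \notin D & forall p, p \in P -> t * p \in D.
Proof.
move=> noeth dim1 Ppr [x xP x0]; have Pid : is_ideal D P by case: Ppr.
have xD := ideal_sub Pid xP; pose Q := localized_colon P x.
pose F J := exists y, [/\ y \in D, J = Q y & 1 \notin Q y].
have FI J : F J -> is_ideal D J by case=> z [_ -> _]; apply: localized_colon_ideal.
have FQ1 : F (Q 1).
  exists 1; split; rewrite ?rpred1 //.
  apply/negP => /localized_colonP [_ [s [e [_ /negP sP eD E]]]]; apply: sP.
  by move: E; rewrite !mulr1 => ->; rewrite mulrC (idealMl Pid).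
have [_ [y [yD -> Q1]] ymax] := noetherian_maximal noeth FI (ex_intro _ _ FQ1).
have Qpr : is_prime_ideal D (Q y).
  apply: localized_colon_maximal_prime => // z zD Qz1 yz.
  by apply: ymax => //; exists z.
have xQ : x \in Q y.
  by apply/localized_colonP; split=> //; exists 1, y; rewrite rpred1; case: Ppr; split=> //; ring.
have PQ : {subset P <= Q y}.
  apply: (dim1 _ Qpr); [by exists x; rewrite ?xQ | by case: Ppr | | by case: Ppr].
  exact: localized_colon_sub.
have [g [gP ggen]] := noetherian_generators noeth Pid.
have [s [sD sP sg]] := localized_colon_common_denom Ppr (fun z zg => PQ z (gP z zg)).
have spy p : p \in P -> exists2 e, e \in D & s * p * y = x * e.
  case/ggen=> c cD ->; apply: (big_ind (fun z => exists2 e, e \in D & s * z * y = x * e)).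
  - by exists 0; rewrite ?rpred0 //; ring.
  - move=> z1 z2 [e1 e1D E1] [e2 e2D E2]; exists (e1 + e2); rewrite ?rpredD //.
    by rewrite mulrDr mulrDl E1 E2 mulrDr.
  - move=> i _; have [e eD E] := sg _ (mem_nth 0 (ltn_ord i)).
    by exists (c i * e); rewrite ?rpredM // [RHS]mulrCA -E; ring.
exists (s * y / x) => [|p /spy [e eD E]].
  apply: contra Q1 => tD; apply/localized_colonP; split; first exact: rpred1.
  by exists s, (s * y / x); split=> //; rewrite mulr1 mulrCA divff // mulr1.
have -> : s * y / x * p = s * p * y / x by ring.
by rewrite E mulrAC divff // mul1r.
Qed.

Lemma char_poly_polyOver n (M : 'M[K]_n) : (forall i j, M i j \in D) ->
  char_poly M \is a polyOver D.
Proof.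
move=> MD; apply: rpred_sum => s _; rewrite rpredM ?rpredX ?rpredN ?rpred1 //.
apply: rpred_prod => i _; rewrite !mxE rpredB ?polyOverC //.
by rewrite rpredMn ?polyOverX.
Qed.

Lemma integrally_closed_stable I t : integrally_closed D -> noetherian D ->
    is_ideal D I -> nonzero_ideal I -> (forall c, c \in I -> t * c \in I) ->
  t \in D.
Proof.
move=> ic noeth Iid [x xI x0] tI; have [g [gI ggen]] := noetherian_generators noeth Iid.
have tg (j : 'I_(size g)) : exists2 c : 'I_(size g) -> K,
    (forall i, c i \in D) & t * g`_j = \sum_(i < size g) c i * g`_i.
  by apply/ggen/tI/gI/mem_nth.
have [C CD Ct] := fin_all_exists2 tg.
pose v := \row_(k < size g) g`_k.
apply: ic; exists (char_poly (\matrix_(k, j) C j k)); split.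
- exact: char_poly_monic.
- by apply: char_poly_polyOver => i j; rewrite mxE.
rewrite -eigenvalue_root_char; apply/eigenvalueP; exists v.
  apply/rowP => j; rewrite !mxE Ct.
  by apply: eq_bigr => i _; rewrite !mxE mulrC.
apply: contra x0 => /eqP v0; have [c _ ->] := ggen _ xI.
apply/eqP/big1 => i _; have := congr1 (fun w : 'rV_(size g) => w 0 i) v0.
by rewrite !mxE => ->; rewrite mulr0.
Qed.

(** * Polynomials modulo a prime ideal *)

Section PolyModPrime.
Variable P : {pred K}.
Hypothesis Ppr : is_prime_ideal D P.

Let Pid : is_ideal D P. Proof. by case: Ppr. Qed.
HB.instance Definition _ := GRing.isZmodClosed.Build K P (ideal_zmod_closed Pid).

Lemma polyOver_ideal_comp (p q : {poly K}) : p \is a polyOver P -> q \is a polyOver D ->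
  p \Po q \is a polyOver P.
Proof.
move=> /polyOverP pP qD; rewrite comp_polyE rpred_sum // => i _.
by apply/polyOverP => k; rewrite coefZ (idealMr Pid) //; apply/polyOverP/rpredX.
Qed.

Lemma first_coef_notin (p : {poly K}) : ~~ (p \is a polyOver P) ->
  exists i, p`_i \notin P /\ forall k, (k < i)%N -> p`_k \in P.
Proof.
move=> pP; have ex_notin : exists i, p`_i \notin P.
  apply: contrapT => nex; case/negP: pP; apply/polyOverP => i.
  by apply: contrapT => /negP iP; apply: nex; exists i.
case: (ex_minnP ex_notin) => i ipP imin; exists i; split => // k ki.
by apply: contraTT ki => /imin; rewrite -leqNgt.
Qed.

Lemma polyOver_prime_mul (f g : {poly K}) : f \is a polyOver D -> g \is a polyOver D ->
  ~~ (f \is a polyOver P) -> ~~ (g \is a polyOver P) -> ~~ (f * g \is a polyOver P).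
Proof.
move=> fD gD /first_coef_notin [i [fi fimin]] /first_coef_notin [j [gj gjmin]].
apply/negP => /polyOverP /(_ (i + j)%N); rewrite coefM.
have ilt : (i < (i + j).+1)%N by rewrite ltnS leq_addr.
rewrite (bigD1 (Ordinal ilt)) //= addKn => fgP.
have rest : \sum_(k < (i + j).+1 | k != Ordinal ilt) f`_k * g`_(i + j - k) \in P.
  apply: rpred_sum => k; rewrite -val_eqE /= neq_ltn => /orP [ki | ik].
    by rewrite (idealMr Pid) ?fimin //; apply/polyOverP.
  rewrite (idealMl Pid) ?gjmin //; first exact/polyOverP.
  by rewrite ltn_subLR ?ltn_add2r // -ltnS.
have := rpredB fgP rest; rewrite addrK; apply/negP.
exact: prime_ideal_mul_notin Ppr (polyOverP fD i) (polyOverP gD j) fi gj.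
Qed.

Lemma prod_polyOver_prime (L : seq {poly K}) :
    all (fun q => (q \is a polyOver D) && ~~ (q \is a polyOver P)) L ->
  (\prod_(q <- L) q \is a polyOver D) && ~~ (\prod_(q <- L) q \is a polyOver P).
Proof.
move=> /allP LP; rewrite big_seq.
apply: (big_ind (fun q => (q \is a polyOver D) && ~~ (q \is a polyOver P))) => //.
  by rewrite rpred1 -polyC1 polyOverC; case: Ppr.
move=> p q /andP [pD pP] /andP [qD qP]; rewrite rpredM //.
exact: polyOver_prime_mul.
Qed.

Lemma polyOver_shift_root (g : {poly K}) e : g \is a polyOver D ->
    ~~ (g \is a polyOver P) -> e \in D -> g.[e] \in P ->
  exists h : {poly K}, [/\ h \is a polyOver D, (size h < size g)%N,
    ~~ (h \is a polyOver P) & forall d, g.[d + e] = g.[e] + d * h.[d]].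
Proof.
move=> gD gP eD geP; pose ge := g \Po ('X + e%:P).
have geD : ge \is a polyOver D by rewrite polyOver_comp // rpredD ?polyOverX ?polyOverC.
have geE : ge = (g.[e])%:P + drop_poly 1 ge * 'X.
  rewrite -[ge in LHS](poly_take_drop 1) expr1; congr (_ + _).
  apply/polyP => -[|i]; rewrite coef_take_poly coefC //=.
  by rewrite -horner_coef0 horner_comp !hornerE.
exists (drop_poly 1 ge); split.
- by apply/polyOverP => i; rewrite coef_drop_poly; apply/polyOverP.
- rewrite size_drop_poly size_comp_poly2 ?size_XaddC // subn1 prednK // size_poly_gt0.
  by apply: contraNneq gP => ->; rewrite polyOver0.
- apply: contra gP => hP; rewrite -(comp_polyXaddC_K g e) -/ge.
  rewrite polyOver_ideal_comp ?rpredB ?polyOverX ?polyOverC // geE rpredD ?polyOverC //.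
  by apply/polyOverP => -[|i]; rewrite coefMX /= ?rpred0 //; apply: (polyOverP hP).
- move=> d; have -> : g.[d + e] = ge.[d] by rewrite horner_comp !hornerE.
  by rewrite {1}geE !hornerE mulrC.
Qed.

Lemma roots_mod_prime_finite (g : {poly K}) (E : {pred K}) :
    g \is a polyOver D -> ~~ (g \is a polyOver P) ->
    {subset E <= D} -> (forall d, d \in E -> g.[d] \in P) ->
  exists s : seq K, all (mem D) s /\ forall d, d \in E -> exists2 r, r \in s & d - r \in P.
Proof.
have [n] := ubnP (size g); elim: n g E => // n IH g E gn gD gP ED Eroot.
have [[e eE] | noE] := pselect (exists e, e \in E); last first.
  by exists [::]; split => // d dE; case: noE; exists d.
have eD := ED _ eE.
have [h [hD hg hP gh]] := polyOver_shift_root gD gP eD (Eroot _ eE).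
pose E' : {pred K} := [pred d | (d + e \in E) && (d \notin P)].
have E'D : {subset E' <= D} by move=> d /andP [/ED deD _]; rewrite -(addrK e d) rpredB.
have [s [sD sE']] : exists s : seq K, all (mem D) s /\
    forall d, d \in E' -> exists2 r, r \in s & d - r \in P.
  apply: (IH h) => //; first exact: leq_trans hg gn.
  move=> d dE'; have /andP [deE dP] := dE'; have dD := E'D d dE'.
  have hdP : d * h.[d] \in P.
    by rewrite -(addKr g.[e] (d * h.[d])) -gh rpredD ?rpredN ?Eroot.
  case: Ppr => _ _ /(_ _ _ dD (rpred_horner hD dD) hdP) [] //.
  by move/negP: dP.
exists (e :: [seq r + e | r <- s]); split.
  by rewrite /= eD all_map; apply: sub_all sD => r; rewrite !inE => rD; rewrite rpredD.
move=> d dE; have [deP | deP] := boolP (d - e \in P); first by exists e; rewrite ?mem_head.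
have [|r rs drP] := sE' (d - e); first by rewrite inE subrK dE.
exists (r + e); last by rewrite opprD addrA addrAC.
by rewrite in_cons (map_f (fun x => x + e)) ?orbT.
Qed.

End PolyModPrime.

End Ideals.

(** * Integer-valued polynomials on an algebra *)

Lemma horner_algE (K : fieldType) (B : algType K) (a : B) (p : {poly K}) :
  horner_alg a p = \sum_(i < size p) p`_i *: a ^+ i.
Proof.
rewrite -[p in LHS]coefK poly_def linear_sum /=; apply: eq_bigr => i _.
by rewrite -mul_polyC rmorphM /= horner_algC rmorphXn /= horner_algX mulr_algl.
Qed.

Lemma horner_alg_scalar (K : fieldType) (B : algType K) (p : {poly K}) (k : K) :
  horner_alg (k%:A : B) p = (p.[k])%:A.
Proof.
rewrite horner_algE horner_coef scaler_suml; apply: eq_bigr => i _.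
by rewrite -scalerA -[k%:A]/(in_alg B k) -rmorphXn.
Qed.

Section StandardAlgebra.
Variables (K : fieldType) (D : {pred K}) (B : algType K) (A : {pred B}).
Hypotheses (Dsub : is_subring D) (sa : standard_assumptions D A).

HB.instance Definition _ := GRing.isSubringClosed.Build K D (is_subring_closed Dsub).

Lemma standard_subring_closed : GRing.subring_closed A.
Proof. by case: sa => -[A1 AB] AM _ _ _; split. Qed.
HB.instance Definition _ := GRing.isSubringClosed.Build B A standard_subring_closed.

Lemma standard_scale d x : d \in D -> x \in A -> d *: x \in A.
Proof. by case: sa => _ _ AZ _ _; apply: AZ. Qed.

Lemma polyOver_IntK f : f \is a polyOver D -> in_IntK A f.
Proof.
move=> /polyOverP fD a aA; rewrite horner_algE rpred_sum // => i _.
by rewrite standard_scale ?rpredX.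
Qed.

Lemma IntK_horner f d : in_IntK A f -> d \in D -> f.[d] \in D.
Proof.
case: sa => _ _ _ _ AK fA dD.
by apply/AK; rewrite -horner_alg_scalar; apply/fA/AK.
Qed.

Section IdealExtension.
Variable P : {pred K}.

Lemma in_ideal_mulD x y :
  in_ideal_mul P A x -> in_ideal_mul P A y -> in_ideal_mul P A (x + y).
Proof.
move=> [s [sP ->]] [s' [s'P ->]]; exists (s ++ s').
by rewrite all_cat sP s'P big_cat.
Qed.

Lemma in_ideal_mul_scale p x : p \in P -> x \in A -> in_ideal_mul P A (p *: x).
Proof. by move=> pP xA; exists [:: (p, x)]; rewrite /= pP xA big_seq1. Qed.

Lemma in_ideal_mul_sum (I : Type) (r : seq I) (F : I -> B) :
  (forall i, in_ideal_mul P A (F i)) -> in_ideal_mul P A (\sum_(i <- r) F i).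
Proof.
move=> FP; apply: (big_ind (in_ideal_mul P A)) => //; last exact: in_ideal_mulD.
by exists [::]; rewrite big_nil.
Qed.

Lemma in_ideal_mulMr x y : in_ideal_mul P A x -> y \in A -> in_ideal_mul P A (x * y).
Proof.
move=> [s [sP ->]] yA; exists [seq (z.1, z.2 * y) | z <- s]; split.
  by rewrite all_map; apply: sub_all sP => -[p z] /andP [/= -> zA]; rewrite rpredM.
by rewrite mulr_suml big_map; apply: eq_bigr => z _; rewrite scalerAl.
Qed.

Lemma in_ideal_mul_horner (p : {poly K}) a : is_ideal D P ->
  p \is a polyOver P -> a \in A -> in_ideal_mul P A (horner_alg a p).
Proof.
move=> Pid pP aA; rewrite horner_algE; apply: in_ideal_mul_sum => i.
by apply: in_ideal_mul_scale; [apply: (polyOver_idealP Dsub Pid) | rewrite rpredX].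
Qed.

Lemma in_ideal_mul_mem k b : (forall p, p \in P -> k * p \in D) ->
  in_ideal_mul P A b -> k *: b \in A.
Proof.
move=> kP [s [sP ->]]; rewrite scaler_sumr big_seq rpred_sum // => z zs.
by have /andP [z1P z2A] := allP sP z zs; rewrite scalerA standard_scale ?kP.
Qed.

End IdealExtension.
End StandardAlgebra.

Section Denominators.
Variables (K : fieldType) (D : {pred K}).
Hypothesis Dsub : is_subring D.
HB.instance Definition _ := GRing.isSubringClosed.Build K D (is_subring_closed Dsub).

Lemma frac_field_common_denom (f : {poly K}) : is_frac_field_of D ->
  exists d, [/\ d \in D, d != 0 & d *: f \is a polyOver D].
Proof.
move=> frac; suff [d [dD d0 df]] : exists d, [/\ d \in D, d != 0 &
    forall k, k \in (f : seq K) -> d * k \in D].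
  exists d; split => //; apply/polyOverP => i; rewrite coefZ.
  by have [/(mem_nth 0)/df | /(nth_default 0) ->] := ltnP i (size f); rewrite ?mulr0 ?rpred0.
elim: (f : seq K) => [|k l [d [dD d0 dl]]]; first by exists 1; rewrite rpred1 oner_eq0.
have [a [b [aD bD b0 ->]]] := frac k.
exists (d * b); split; rewrite ?rpredM ?mulf_neq0 // => z; rewrite inE => /predU1P [->|zl].
  by rewrite [d * b * _](_ : _ = d * a) ?rpredM //; field.
by rewrite mulrAC rpredM ?dl.
Qed.

Lemma exists_maximal_denominator (f : {poly K}) : noetherian D -> integrally_closed D ->
    dim_le1 D -> is_frac_field_of D -> ~~ (f \is a polyOver D) ->
  exists M c, [/\ maximal_ideal D M, nonzero_ideal M, c \in M,
    c *: f \is a polyOver D & ~~ (c *: f \is a polyOver M)].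
Proof.
move=> noeth ic dim1 frac fD.
pose I : {pred K} := [pred c | (c \in D) && (c *: f \is a polyOver D)].
have Iid : is_ideal D I.
  split=> [c /andP [] // | | x y /andP [xD xf] /andP [yD yf] | d x dD /andP [xD xf]].
  - by rewrite inE rpred0 scale0r polyOver0.
  - by rewrite inE rpredD // scalerDl rpredD.
  - by rewrite inE rpredM // -scalerA polyOverZ.
have [d0 [d0D d00 d0f]] := frac_field_common_denom f frac.
have I1 : 1 \notin I by rewrite inE rpred1 scale1r.
have [M Mmax IM] := noetherian_maximal_ideal_sup Dsub noeth Iid I1.
have [Mid _ _] := Mmax.
have Mnz : nonzero_ideal M by exists d0; rewrite ?IM ?inE ?d0D.
have [t tD tM] := prime_ideal_inverse Dsub noeth dim1 (maximal_ideal_prime Dsub Mmax) Mnz.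
have [c [k [cI ckM]]] : exists c k, c \in I /\ c * f`_k \notin M.
  apply: contrapT => noc; case/negP: tD.
  apply: (integrally_closed_stable Dsub ic noeth Iid); first by exists d0; rewrite ?inE ?d0D.
  move=> c cI; rewrite inE tM ?IM //=; apply/polyOverP => k; rewrite coefZ -mulrA tM //.
  by apply: contrapT => /negP ckM; apply: noc; exists c, k.
have /andP [cD cfD] := cI; exists M, c; split; rewrite ?IM //.
by apply: contra ckM => /(polyOver_idealP Dsub Mid) /(_ k); rewrite coefZ.
Qed.

End Denominators.

Section IntegerValued.
Variables (K : fieldType) (D : {pred K}) (B : algType K) (A : {pred B}).
Hypotheses (Dsub : is_subring D) (sa : standard_assumptions D A).
HB.instance Definition _ := GRing.isSubringClosed.Build K D (is_subring_closed Dsub).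

Lemma IntK_nontrivial_bounded f : noetherian D -> integrally_closed D -> dim_le1 D ->
    is_frac_field_of D -> in_IntK A f -> ~~ (f \is a polyOver D) ->
  exists P, [/\ is_prime_ideal D P, nonzero_ideal P, finite_quotient D P
    & bounded_algebraic_mod D P A].
Proof.
move=> noeth ic dim1 frac fA fD.
have [M [c [Mmax Mnz cM cfD cfM]]] := exists_maximal_denominator Dsub noeth ic dim1 frac fD.
have [Mid _ _] := Mmax; have Mpr := maximal_ideal_prime Dsub Mmax.
exists M; split => //.
  have [|s [sD sM]] := roots_mod_prime_finite Dsub Mpr cfD cfM (E := D) (fun d => id).
    by move=> d dD; rewrite -mul_polyC hornerM hornerC (idealMr Mid) // (IntK_horner sa).
  by exists s.
exists (size f) => a aA; exists (c *: f); split; rewrite ?(leq_trans (size_scale_leq _ _)) //.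
by rewrite linearZ /= mulr_algl; apply: in_ideal_mul_scale (fA _ aA).
Qed.

Definition residue_poly (s : seq K) n (c : {ffun 'I_n.+1 -> 'I_(size s)}) : {poly K} :=
  \poly_(i < n.+1) s`_(c (inord i)).

Lemma residue_poly_approx P (s : seq K) n (g : {poly K}) : is_ideal D P ->
    (forall d, d \in D -> exists2 r, r \in s & d - r \in P) ->
    g \is a polyOver D -> (size g <= n.+1)%N ->
  exists c : {ffun 'I_n.+1 -> 'I_(size s)}, residue_poly c - g \is a polyOver P.
Proof.
move=> Pid srep gD gn.
have cE (i : 'I_n.+1) : exists j : 'I_(size s), g`_i - s`_j \in P.
  have [r rs grP] := srep _ (polyOverP gD i).
  by exists (Ordinal (etrans (index_mem r s) rs)); rewrite /= nth_index.
have [cf cfP] := fin_all_exists cE; exists [ffun i => cf i].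
apply/(polyOver_idealP Dsub Pid) => k; rewrite coefB coef_poly.
case: ltnP => [kn | nk]; last by rewrite nth_default ?subrr ?(leq_trans gn); case: Pid.
by rewrite ffunE -opprB (idealN Dsub Pid) //; have := cfP (inord k); rewrite inordK.
Qed.

Lemma exists_poly_vanishing_mod P : is_prime_ideal D P -> finite_quotient D P ->
    bounded_algebraic_mod D P A ->
  exists G : {poly K}, [/\ G \is a polyOver D, ~~ (G \is a polyOver P)
    & forall a, a \in A -> in_ideal_mul P A (horner_alg a G)].
Proof.
move=> Ppr [s [sD srep]] [n bnd]; have [Pid _ _] := Ppr.
have resD (c : {ffun 'I_n.+1 -> 'I_(size s)}) : residue_poly c \is a polyOver D.
  by apply: polyOver_poly => i _; apply: (allP sD); apply: mem_nth.
(* Each a in A is a root modulo PA of one of the factors of the product. *)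
pose L := [seq residue_poly c | c <- enum {ffun 'I_n.+1 -> 'I_(size s)}
                                & ~~ (residue_poly c \is a polyOver P)].
have /andP [LD LP] : (\prod_(q <- L) q \is a polyOver D) &&
                    ~~ (\prod_(q <- L) q \is a polyOver P).
  apply: (prod_polyOver_prime Dsub Ppr).
  by apply/allP => q /mapP [c]; rewrite mem_filter => /andP [cP _] ->; rewrite resD.
exists (\prod_(q <- L) q); split => // a aA.
have [g [gD gn gP gPA]] := bnd a aA.
have [c cg] := residue_poly_approx Pid srep gD gn.
have cL : residue_poly c \in L.
  apply/mapP; exists c => //; rewrite mem_filter mem_enum andbT.
  apply: contra gP => cP; rewrite -(subKr (residue_poly c) g).
  by apply: (polyOver_idealB Dsub Pid).
rewrite (big_rem _ cL) /= rmorphM /=; apply: (in_ideal_mulMr sa); last first.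
  apply: (polyOver_IntK Dsub sa) => //; rewrite (big_seq _ _ _ id) rpred_prod // => q /mem_rem.
  by case/mapP => c' _ ->.
rewrite -(subrK g (residue_poly c)) rmorphD /=.
exact: in_ideal_mulD (in_ideal_mul_horner Dsub sa Pid cg aA) gPA.
Qed.

Lemma bounded_IntK_nontrivial P : noetherian D -> dim_le1 D ->
    is_prime_ideal D P -> nonzero_ideal P -> finite_quotient D P ->
    bounded_algebraic_mod D P A ->
  exists2 f, in_IntK A f & ~~ (f \is a polyOver D).
Proof.
move=> noeth dim1 Ppr Pnz Pfin Pbnd; have [Pid _ _] := Ppr.
have [G [GD GP GA]] := exists_poly_vanishing_mod Ppr Pfin Pbnd.
have [k [Gk _]] := first_coef_notin Dsub Ppr GP.
have [r rD rG] := maximal_ideal_unit Dsub (dim_le1_maximal dim1 Ppr Pnz) (polyOverP GD k) Gk.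
have [t tD tP] := prime_ideal_inverse Dsub noeth dim1 Ppr Pnz.
(* r G_k = 1 mod P makes the k-th coefficient t r G_k non-integral, while
   t P <= D makes t r G map A into A. *)
exists ((t * r) *: G).
  move=> a aA; rewrite linearZ /= mulr_algl; apply: (in_ideal_mul_mem sa) (GA a aA) => p pP.
  by rewrite -mulrA tP // (idealMl Pid).
apply: contra tD => /polyOverP /(_ k); rewrite coefZ => trG.
have -> : t = t * r * G`_k + t * (1 - r * G`_k) by ring.
by rewrite rpredD ?tP.
Qed.

End IntegerValued.

Unset Implicit Arguments.

Theorem mainTheorem9 (K : fieldType) (D : {pred K}) (B : algType K) (A : {pred B}) :
  dedekind D -> is_frac_field_of D -> standard_assumptions D A ->
  ((~ forall f : {poly K}, in_IntK A f <-> f \is a polyOver D) <->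
   exists P : {pred K},
     [/\ is_prime_ideal D P, nonzero_ideal P, finite_quotient D P
       & bounded_algebraic_mod D P A]).
Proof.
case=> Dsub noeth ic dim1 frac sa.
split=> [nontriv | [P [Ppr Pnz Pfin Pbnd]] IntK_eq].
  have [f fA fD] : exists2 f, in_IntK A f & ~~ (f \is a polyOver D).
    apply: contrapT => nof; apply: nontriv => f; split => [fA | /(polyOver_IntK Dsub sa) //].
    by apply: contrapT => /negP fD; apply: nof; exists f.
  by apply: (IntK_nontrivial_bounded Dsub sa noeth ic dim1 frac fA fD).
have [f fA /negP] := bounded_IntK_nontrivial Dsub sa noeth dim1 Ppr Pnz Pfin Pbnd.
by apply; apply/IntK_eq.
Qed.
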